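(* Let $n\ge d\ge 1$ and let $(A,C)$ be a strict nondegenerate HOON pair, with $A$ real $n\times n$ and $C$ real $d\times n$. If $(\tilde A,\tilde C)$ is a strict HOON pair that is equivalent to $(A,C)$, then $\tilde A=A$ and $\tilde C=C$.
   Context: $(A,C)$ is a HOON pair if $A$ is upper Hessenberg ($A_{i,j}=0$ for $i>j+1$), $C_{1,j}=0$ for $j>1$, and $A^{*}A=\mathbb{I}_n-C^{*}C$ (${}^*$ = transpose). It is nondegenerate if $|C_{1,1}|<1$, unreduced if $A_{i+1,i}\neq 0$ for $1\le i<n$ and $C_{1,1}\ne 0$, standard if $A_{i+1,i}\ge 0$ for $1\le i<n$ and $0\le C_{1,1}<1$, and strict if it is unreduced and standard. Two pairs are equivalent if $\tilde A=T^{-1}AT$ and $\tilde C=CT$ for some invertible real matrix $T$. *)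

From HB Require Import structures.
From mathcomp Require Import all_boot all_order all_algebra.
From mathcomp Require Import reals.
Set Implicit Arguments. Unset Strict Implicit. Unset Printing Implicit Defensive.
Import Order.TTheory GRing.Theory Num.Theory.
Local Open Scope ring_scope.

(* Indices are 0-based: paper's entry (i,j) is A i' j' with i = i'+1, j = j'+1. *)

Definition HOON (R : realType) (n d : nat) (A : 'M[R]_n) (C : 'M[R]_(d, n)) : Prop :=
  (forall i j : 'I_n, (j.+1 < i)%N -> A i j = 0) /\
  (forall (i : 'I_d) (j : 'I_n), val i = 0%N -> (0 < j)%N -> C i j = 0) /\
  A^T *m A = 1%:M - C^T *m C.

Definition HOON_nondegenerate (R : realType) (n d : nat) (A : 'M[R]_n) (C : 'M[R]_(d, n)) : Prop :=
  forall (i : 'I_d) (j : 'I_n), val i = 0%N -> val j = 0%N -> `|C i j| < 1.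

Definition HOON_unreduced (R : realType) (n d : nat) (A : 'M[R]_n) (C : 'M[R]_(d, n)) : Prop :=
  (forall i j : 'I_n, val i = (val j).+1 -> A i j != 0) /\
  (forall (i : 'I_d) (j : 'I_n), val i = 0%N -> val j = 0%N -> C i j != 0).

Definition HOON_standard (R : realType) (n d : nat) (A : 'M[R]_n) (C : 'M[R]_(d, n)) : Prop :=
  (forall i j : 'I_n, val i = (val j).+1 -> 0 <= A i j) /\
  (forall (i : 'I_d) (j : 'I_n), val i = 0%N -> val j = 0%N -> 0 <= C i j < 1).

Definition HOON_strict (R : realType) (n d : nat) (A : 'M[R]_n) (C : 'M[R]_(d, n)) : Prop :=
  HOON_unreduced A C /\ HOON_standard A C.

Definition HOON_equiv (R : realType) (n d : nat) (A : 'M[R]_n) (C : 'M[R]_(d, n))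
    (At : 'M[R]_n) (Ct : 'M[R]_(d, n)) : Prop :=
  exists T : 'M[R]_n, T \in unitmx /\ At = invmx T *m A *m T /\ Ct = C *m T.

From HB Require Import structures.
From mathcomp Require Import all_boot all_order all_algebra.
From mathcomp Require Import reals.
From mathcomp Require Import ring lra.
Set Implicit Arguments. Unset Strict Implicit. Unset Printing Implicit Defensive.
Import Order.TTheory GRing.Theory Num.Theory.
Local Open Scope ring_scope.

(* For a HOON pair, |v|^2 = sum_(k<N) |C A^k v|^2 + |A^N v|^2.  When the
   pair is unreduced, (C, A) is observable, so the observability Gramian is positive
   definite and |A^N v| -> 0: the norm of v is the total output energy of v.  An
   equivalence T turns the outputs of (At, Ct) from w into those of (A, C) from T w,
   so T is an isometry, i.e. orthogonal.  The first rows of Ct = C T and C force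
   T e_1 = e_1, and comparing columns of A T = T At, both Hessenberg with positive
   subdiagonals, gives T e_k = e_k column after column. *)

Section QuadraticForms.
Variable R : realFieldType.

Definition sqnorm m (v : 'cV[R]_m) : R := \sum_i v i 0 ^+ 2.

Definition qform m (M : 'M[R]_m) (u v : 'cV[R]_m) : R := (u^T *m M *m v) 0 0.

Lemma qformE m (M : 'M[R]_m) u v :
  qform M u v = \sum_i \sum_j u i 0 * M i j * v j 0.
Proof.
rewrite /qform mxE [RHS]exchange_big; apply: eq_bigr => j _ /=.
by rewrite mxE big_distrl; apply: eq_bigr => i _; rewrite !mxE.
Qed.

Lemma sqnorm_ge0 m (v : 'cV[R]_m) : 0 <= sqnorm v.
Proof. by apply: sumr_ge0 => i _; rewrite sqr_ge0. Qed.

Lemma sqnorm_eq0 m (v : 'cV[R]_m) : sqnorm v = 0 -> v = 0.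
Proof.
move=> /eqP; rewrite psumr_eq0 => [/allP v0|i _]; last exact: sqr_ge0.
apply/matrixP => i j; rewrite (ord1 j) mxE.
by apply/eqP; rewrite -sqrf_eq0; apply: v0; rewrite mem_index_enum.
Qed.

Lemma sqr_entry_le_sqnorm m (v : 'cV[R]_m) i : v i 0 ^+ 2 <= sqnorm v.
Proof. by rewrite /sqnorm (bigD1 i) //= lerDl sumr_ge0 // => k _; rewrite sqr_ge0. Qed.

Lemma sum_sqr_eq1_single m (v : 'I_m -> R) j :
  \sum_i v i ^+ 2 = 1 -> (forall i, i != j -> v i = 0) -> 0 < v j -> v j = 1.
Proof.
move=> norm1 v0 vj_gt0; apply/eqP; rewrite -sqrp_eq1 ?ltW // -norm1.
by rewrite (big_only1 j) // => i i_neq _; rewrite v0 // expr0n.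
Qed.

Lemma sum_sqr_eq1_eq0 m (v : 'I_m -> R) j :
  \sum_i v i ^+ 2 = 1 -> v j = 1 -> forall i, i != j -> v i = 0.
Proof.
rewrite (bigD1 j) //= => + vj1; rewrite vj1 expr1n -[RHS]addr0 => /addrI /eqP.
rewrite psumr_eq0 => [/allP v0 i i_neq|i _]; last exact: sqr_ge0.
by have := v0 i (mem_index_enum _); rewrite i_neq sqrf_eq0 => /eqP.
Qed.

Lemma sqnorm_mul p m (M : 'M[R]_(p, m)) v : sqnorm (M *m v) = qform (M^T *m M) v v.
Proof.
rewrite /qform !mulmxA -trmx_mul -mulmxA mxE.
by apply: eq_bigr => i _; rewrite !mxE expr2.
Qed.

Lemma qform1 m (v : 'cV[R]_m) : qform 1%:M v v = sqnorm v.
Proof. by rewrite -[v in RHS]mul1mx sqnorm_mul trmx1 mul1mx. Qed.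

Lemma qform_delta m (M : 'M[R]_m) i j : qform M (delta_mx i 0) (delta_mx j 0) = M i j.
Proof. by rewrite /qform trmx_delta -rowE -colE !mxE. Qed.

Lemma qformD m (M N : 'M[R]_m) u v : qform (M + N) u v = qform M u v + qform N u v.
Proof. by rewrite /qform mulmxDr mulmxDl mxE. Qed.

Lemma qformB m (M N : 'M[R]_m) u v : qform (M - N) u v = qform M u v - qform N u v.
Proof. by rewrite /qform mulmxBr mulmxBl !mxE. Qed.

Lemma qform_sum m I (r : seq I) (P : pred I) (F : I -> 'M[R]_m) u v :
  qform (\sum_(k <- r | P k) F k) u v = \sum_(k <- r | P k) qform (F k) u v.
Proof. by rewrite /qform mulmx_sumr mulmx_suml summxE. Qed.

Lemma qform_expand m (M : 'M[R]_m) x y t :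
  qform M (x + t *: y) (x + t *: y) =
  qform M x x + t * (qform M x y + qform M y x) + t ^+ 2 * qform M y y.
Proof.
rewrite /qform [(x + t *: y)^T]linearD linearZ /= !mulmxDl !mulmxDr.
rewrite -!scalemxAl -!scalemxAr !mxE; ring.
Qed.

Lemma qform_le_sqnorm m (M : 'M[R]_m) v :
  qform M v v <= (\sum_i \sum_j `|M i j|) * sqnorm v.
Proof.
rewrite qformE mulr_suml; apply: ler_sum => i _.
rewrite mulr_suml; apply: ler_sum => j _.
have vij : `|v i 0 * v j 0| <= sqnorm v.
  have := sqr_entry_le_sqnorm v i; have := sqr_entry_le_sqnorm v j.
  by rewrite ler_norml; move: (v i 0) (v j 0) => a b; nra.
rewrite mulrAC mulrC; apply: le_trans (ler_norm _) _.
by rewrite normrM ler_wpM2l.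
Qed.

Lemma qform_eq0 m (M : 'M[R]_m) :
  M^T = M -> (forall v, qform M v v = 0) -> M = 0.
Proof.
move=> symM q0; apply/matrixP => i j; rewrite mxE.
have Mji : M j i = M i j by rewrite -[in LHS]symM mxE.
have := q0 (delta_mx i 0 + 1 *: delta_mx j 0).
by rewrite qform_expand !q0 !qform_delta Mji; lra.
Qed.

Lemma sqnorm_le_qform m (G : 'M[R]_m) :
  G^T = G -> (forall v, 0 <= qform G v v) -> G \in unitmx ->
  exists2 L, 0 < L & forall v, sqnorm v <= L * qform G v v.
Proof.
move=> symG psdG unitG; set H := invmx G.
set S := \sum_i \sum_j `|H i j|.
have S_ge0 : 0 <= S by apply: sumr_ge0 => i _; apply: sumr_ge0.
exists (S + 1) => [|v]; first exact: ltr_wpDl S_ge0 ltr01.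
have GHl : qform G (H *m v) v = sqnorm v.
  by rewrite /qform trmx_mul trmx_inv symG -(mulmxA v^T) (mulVmx unitG) -qform1.
have GHr : qform G v (H *m v) = sqnorm v.
  by rewrite /qform mulmxA -(mulmxA v^T) (mulmxV unitG) -qform1.
have GHH : qform G (H *m v) (H *m v) = qform H v v.
  rewrite /qform trmx_mul trmx_inv symG mulmxA -(mulmxA (v^T *m _)).
  by rewrite (mulmxV unitG) mulmx1.
(* Test positivity at G^-1 v - (S + 1) v; the cross terms are both |v|^2. *)
have := psdG (H *m v + (- (S + 1)) *: v).
rewrite qform_expand GHl GHr GHH.
have := qform_le_sqnorm H v; rewrite -/S.
have := sqnorm_ge0 v; have := psdG v.
move: (sqnorm v) (qform G v v) (qform H v v) => s c h; nra.
Qed.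

End QuadraticForms.

Lemma small_of_telescoping (R : archiRealFieldType) (s : nat -> R) (p : nat) (L : R) :
  0 <= L -> (forall N, 0 <= s N) -> (forall N, s (N + p) <= s N) ->
  (forall N, s N <= L * (s N - s (N + p))) ->
  forall e, 0 < e -> exists N, s N <= e.
Proof.
move=> L_ge0 s_ge0 s_nonincr s_step e e_gt0.
have telescope M : M%:R * s (M * p)%N <= L * (s 0%N - s (M * p)%N).
  elim: M => [|M IH]; first by rewrite mul0r mul0n subrr mulr0.
  rewrite mulSnr -natr1.
  move: IH (s_step (M * p)%N) (s_nonincr (M * p)%N) (ler0n R M).
  move: (s (M * p)%N) (s (M * p + p)%N) (M%:R : R) => a b m; nra.
pose M := Num.bound (L * s 0%N / e).
have M_large : L * s 0%N < M%:R * e.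
  by rewrite -ltr_pdivrMr // archi_boundP // divr_ge0 // ?mulr_ge0 // ltW.
exists (M * p)%N; move: M_large (telescope M) (s_ge0 (M * p)%N) (ler0n R M) (s_ge0 0%N).
move: (s 0%N) (s (M * p)%N) (M%:R : R) => a b m; nra.
Qed.

Definition upper_hessenberg (R : pzRingType) n (M : 'M[R]_n) :=
  forall i j : 'I_n, (j.+1 < i)%N -> M i j = 0.

Definition subdiag_gt0 (R : numDomainType) n (M : 'M[R]_n) :=
  forall i j : 'I_n, val i = (val j).+1 -> 0 < M i j.

Lemma mulmx_hessenberg_entry (R : pzRingType) p n (M : 'M[R]_(p, n)) (H : 'M[R]_n)
    i (k k' : 'I_n) :
  upper_hessenberg H -> val k' = k.+1 -> (forall m : 'I_n, (m <= k)%N -> M i m = 0) ->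
  (M *m H) i k = M i k' * H k' k.
Proof.
move=> H_hess k'E M0; rewrite mxE (big_only1 k') // => m m_neq _.
have [m_le|k_lt] := leqP m k; first by rewrite M0 // mul0r.
rewrite H_hess ?mulr0 // ltn_neqAle k_lt andbT.
by apply: contra m_neq => /eqP mE; apply/eqP/val_inj; rewrite k'E mE.
Qed.

Lemma trmx_mul_hessenberg_entry (R : comPzRingType) n (H : 'M[R]_n) (x : 'cV[R]_n)
    (k k' : 'I_n) :
  upper_hessenberg H -> val k' = k.+1 -> (forall m : 'I_n, (m <= k)%N -> x m 0 = 0) ->
  (H^T *m x) k 0 = x k' 0 * H k' k.
Proof.
move=> H_hess k'E x0; rewrite -[H^T *m x]trmxK trmx_mul trmxK mxE.
by rewrite (mulmx_hessenberg_entry H_hess k'E) => [|m mk]; rewrite mxE // x0.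
Qed.

Section Energy.
Variables (R : realType) (n d : nat) (A : 'M[R]_n) (C : 'M[R]_(d, n)).
Hypothesis HAC : HOON A C.

Lemma HOON_sqnorm v : sqnorm v = sqnorm (C *m v) + sqnorm (A *m v).
Proof. by rewrite !sqnorm_mul -qformD HAC.2.2 addrC subrK qform1. Qed.

Lemma HOON_sqnorm_iter N v :
  sqnorm v = \sum_(k < N) sqnorm (C *m A ^+ k *m v) + sqnorm (A ^+ N *m v).
Proof.
elim: N => [|N IH]; first by rewrite big_ord0 add0r expr0 mul1mx.
rewrite {1}IH (HOON_sqnorm (A ^+ N *m v)) big_ord_recr /= addrA.
by rewrite exprS -mulmxE !mulmxA.
Qed.

Lemma HOON_sqnorm_exp_le N v : sqnorm (A ^+ N *m v) <= sqnorm v.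
Proof.
by rewrite [leRHS](HOON_sqnorm_iter N) lerDr sumr_ge0 // => k _; apply: sqnorm_ge0.
Qed.

End Energy.

Definition obs_gram (R : realFieldType) n d (A : 'M[R]_n) (C : 'M[R]_(d, n)) N :=
  \sum_(k < N) (C *m A ^+ k)^T *m (C *m A ^+ k).

Lemma obs_gram_qform (R : realFieldType) n d (A : 'M[R]_n) (C : 'M[R]_(d, n)) N v :
  qform (obs_gram A C N) v v = \sum_(k < N) sqnorm (C *m A ^+ k *m v).
Proof. by rewrite qform_sum; apply: eq_bigr => k _; rewrite sqnorm_mul. Qed.

Lemma obs_gram_sym (R : realFieldType) n d (A : 'M[R]_n) (C : 'M[R]_(d, n)) N :
  (obs_gram A C N)^T = obs_gram A C N.
Proof. by rewrite raddf_sum; apply: eq_bigr => k _ /=; rewrite trmx_mul trmxK. Qed.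

Lemma obs_gram_psd (R : realFieldType) n d (A : 'M[R]_n) (C : 'M[R]_(d, n)) N v :
  0 <= qform (obs_gram A C N) v v.
Proof. by rewrite obs_gram_qform sumr_ge0 // => k _; apply: sqnorm_ge0. Qed.

Lemma HOON_sqnorm_le_of_outputs (R : realType) n n' d (A : 'M[R]_n) (C : 'M[R]_(d, n))
    (A' : 'M[R]_n') (C' : 'M[R]_(d, n')) x y :
  HOON A C -> HOON A' C' ->
  (forall e, 0 < e -> exists N, sqnorm (A ^+ N *m x) <= e) ->
  (forall k, C *m A ^+ k *m x = C' *m A' ^+ k *m y) ->
  sqnorm x <= sqnorm y.
Proof.
move=> HAC HAC' x_stable outputs; apply/ler_addgt0Pr => e e_gt0.
have [N xN_small] := x_stable e e_gt0.
rewrite (HOON_sqnorm_iter HAC N x) (HOON_sqnorm_iter HAC' N y).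
under eq_bigr => k _ do rewrite outputs.
by have := sqnorm_ge0 (A' ^+ N *m y); lra.
Qed.

Section Unreduced.
Variables (R : realType) (n d : nat) (A : 'M[R]_n.+1) (C : 'M[R]_(d.+1, n.+1)).
Hypotheses (HAC : HOON A C) (unred : HOON_unreduced A C).

Lemma HOON_row0_mul p (M : 'M[R]_(n.+1, p)) j : (C *m M) 0 j = C 0 0 * M 0 j.
Proof.
rewrite mxE (big_only1 0) // => m m_neq0 _.
by rewrite HAC.2.1 ?mul0r // lt0n; apply: contra m_neq0 => /eqP m0; apply/eqP/val_inj.
Qed.

Lemma HOON_trmx_mul_kernel (x : 'cV[R]_n.+1) : C *m x = 0 -> A^T *m (A *m x) = x.
Proof. by move=> Cx0; rewrite mulmxA HAC.2.2 mulmxBl mul1mx -mulmxA Cx0 mulmx0 subr0. Qed.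

(* On an unobservable trajectory A^T A = 1, so A^T steps backwards along it, and the
   Hessenberg shape of A^T propagates the zero first entries one index per step. *)
Lemma HOON_backward_vanish (w : nat -> 'cV[R]_n.+1) :
  (forall k, (k <= n)%N -> w k 0 0 = 0) ->
  (forall k, (k < n)%N -> A^T *m w k.+1 = w k) ->
  forall j, (j <= n)%N -> forall k, (j <= k <= n)%N ->
  forall i : 'I_n.+1, (i <= j)%N -> w k i 0 = 0.
Proof.
move=> w_top w_back; elim=> [|j IH] jn k /andP[jk kn] i ij.
  have -> : i = 0 by apply/val_inj; move: ij; rewrite leqn0 => /eqP.
  exact: w_top.
have [i_le|j_lt] := leqP i j; first by apply: IH; rewrite ?(ltnW jn) ?(ltnW jk).
have iE : val i = j.+1 by apply/eqP; rewrite eqn_leq ij j_lt.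
pose jo : 'I_n.+1 := inord j.
have joE : val jo = j by rewrite /= inordK // ltnS ltnW.
have k_gt0 : (0 < k)%N by apply: leq_trans jk.
have : (A^T *m w k) jo 0 = 0.
  rewrite -[k](prednK k_gt0) w_back ?prednK ?(leq_trans _ kn) //.
  by apply: IH; rewrite ?joE ?(ltnW jn) // -ltnS prednK // jk (leq_trans (leq_pred k)).
rewrite (trmx_mul_hessenberg_entry HAC.1 (_ : val i = jo.+1)) ?joE // => [|m mj].
  by move/eqP; rewrite mulf_eq0 (negbTE (unred.1 i jo _)) ?orbF ?joE // => /eqP.
by rewrite IH ?(ltnW jn) ?(ltnW jk) // -joE.
Qed.

Lemma HOON_observable (v : 'cV[R]_n.+1) :
  (forall k, (k <= n)%N -> C *m A ^+ k *m v = 0) -> v = 0.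
Proof.
move=> out0; pose w k := A ^+ k *m v.
have w_top k : (k <= n)%N -> w k 0 0 = 0.
  move=> kn; have := congr1 (fun M : 'cV_d.+1 => M 0 0) (out0 k kn).
  rewrite -mulmxA HOON_row0_mul [X in _ = X]mxE => /eqP.
  by rewrite mulf_eq0 (negbTE (unred.2 0 0 erefl erefl)) => /eqP.
have w_back k : (k < n)%N -> A^T *m w k.+1 = w k.
  move=> kn; rewrite /w exprS -mulmxE -mulmxA HOON_trmx_mul_kernel //.
  by rewrite mulmxA out0 // ltnW.
have w_n : w n = 0.
  apply/matrixP => i j; rewrite (ord1 j) [RHS]mxE.
  by apply: (HOON_backward_vanish w_top w_back (leqnn n)); rewrite ?leqnn // -ltnS.
have v_back k : (k <= n)%N -> v = A^T ^+ k *m w k.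
  elim: k => [|k IH] kn; first by rewrite /w !expr0 !mul1mx.
  by rewrite (IH (ltnW kn)) -(w_back k kn) exprSr -mulmxE mulmxA.
by rewrite (v_back n) // w_n mulmx0.
Qed.

Lemma obs_gram_unit : obs_gram A C n.+1 \in unitmx.
Proof.
rewrite unitmxE unitfE; apply/negP => /det0P [w w_neq0 wG].
have : qform (obs_gram A C n.+1) w^T w^T = 0 by rewrite /qform trmxK wG mul0mx mxE.
rewrite obs_gram_qform => /eqP; rewrite psumr_eq0 => [/allP outputs0|k _]; last first.
  exact: sqnorm_ge0.
suff : w^T = 0 by move/eqP; rewrite trmx_eq0 (negbTE w_neq0).
apply: HOON_observable => k kn; apply: sqnorm_eq0; apply/eqP.
by have := outputs0 (Ordinal (kn : (k < n.+1)%N)) (mem_index_enum _).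
Qed.

Lemma HOON_stable u e : 0 < e -> exists N, sqnorm (A ^+ N *m u) <= e.
Proof.
have [L L_gt0 hL] :=
  sqnorm_le_qform (obs_gram_sym A C n.+1) (obs_gram_psd A C n.+1) obs_gram_unit.
have expD N : A ^+ (N + n.+1) *m u = A ^+ n.+1 *m (A ^+ N *m u).
  by rewrite addnC exprD -mulmxE mulmxA.
apply: (small_of_telescoping (s := fun N => sqnorm (A ^+ N *m u)) (p := n.+1) (ltW L_gt0)).
- by move=> N; apply: sqnorm_ge0.
- by move=> N; rewrite expD (HOON_sqnorm_exp_le HAC).
- move=> N; rewrite expD {2}(HOON_sqnorm_iter HAC n.+1 (A ^+ N *m u)).
  by rewrite -obs_gram_qform addrK hL.
Qed.

End Unreduced.

Lemma expr_conjmx (R : comUnitRingType) n (A T : 'M[R]_n.+1) k :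
  T \in unitmx -> (invmx T *m A *m T) ^+ k = invmx T *m A ^+ k *m T.
Proof.
move=> T_unit; elim: k => [|k IH]; first by rewrite !expr0 mulmx1 mulVmx.
by rewrite !exprS IH -!mulmxE !mulmxA (mulmxK T_unit).
Qed.

Lemma orthogonal_col_dot (R : pzRingType) n (T : 'M[R]_n) a b :
  T^T *m T = 1%:M -> \sum_i T i a * T i b = (a == b)%:R.
Proof.
move=> /(congr1 (fun M : 'M_n => M a b)); rewrite !mxE => <-.
by apply: eq_bigr => i _; rewrite mxE.
Qed.

Lemma HOON_strict_subdiag_gt0 (R : realType) n d (A : 'M[R]_n) (C : 'M[R]_(d, n)) :
  HOON_strict A C -> subdiag_gt0 A.
Proof. by move=> [[A_neq0 _] [A_ge0 _]] i j ij; rewrite lt_def A_neq0 ?A_ge0. Qed.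

Lemma HOON_strict_C00_gt0 (R : realType) n d (A : 'M[R]_n.+1) (C : 'M[R]_(d.+1, n.+1)) :
  HOON_strict A C -> 0 < C 0 0.
Proof.
move=> [[_ C_neq0] [_ C_01]]; have /andP[C_ge0 _] := C_01 0 0 erefl erefl.
by rewrite lt_def C_neq0.
Qed.

Lemma ltn_ord_eqF n (i j : 'I_n) : (i < j)%N -> (i == j) = false.
Proof. by move=> ij; rewrite -val_eqE ltn_eqF. Qed.

Section OrthogonalIntertwiner.
Variables (R : realFieldType) (n : nat) (A At T : 'M[R]_n.+1).
Hypotheses (T_orth : T^T *m T = 1%:M) (AT : A *m T = T *m At).
Hypotheses (A_hess : upper_hessenberg A) (At_hess : upper_hessenberg At).
Hypotheses (A_sub : subdiag_gt0 A) (At_sub : subdiag_gt0 At).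

Lemma orthogonal_intertwiner_col (j k : 'I_n.+1) : val j = k.+1 ->
  (forall i (m : 'I_n.+1), (m < j)%N -> T i m = (i == m)%:R) ->
  forall i, T i j = (i == j)%:R.
Proof.
move=> jE cols.
have low (i : 'I_n.+1) : (i < j)%N -> T i j = 0.
  move=> ij; have := orthogonal_col_dot i j T_orth.
  rewrite (big_only1 i) // => [|m m_neq _]; last by rewrite cols // (negbTE m_neq) mul0r.
  by rewrite (cols i i) // eqxx mul1r => ->; rewrite ltn_ord_eqF.
have entry (i : 'I_n.+1) : (j <= i)%N -> A i k = T i j * At j k.
  move=> ji; have := congr1 (fun M : 'M_n.+1 => M i k) AT.
  rewrite (mulmx_hessenberg_entry At_hess jE) => [<-|m mk]; last first.
    have mj : (m < j)%N by rewrite jE ltnS.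
    by rewrite cols // eq_sym ltn_ord_eqF // (leq_trans mj ji).
  rewrite mxE (big_only1 k) // => [|m m_neq _]; last first.
    by rewrite (cols m k) ?jE // (negbTE m_neq) mulr0.
  by rewrite (cols k k) ?jE // eqxx mulr1.
have At_pos : 0 < At j k := At_sub jE.
have high (i : 'I_n.+1) : (j < i)%N -> T i j = 0.
  move=> ji; have /eqP := entry i (ltnW ji); rewrite A_hess -?jE // eq_sym mulf_eq0.
  by rewrite (gt_eqF At_pos) orbF => /eqP.
have diag : T j j = 1.
  apply: (@sum_sqr_eq1_single _ _ (fun i => T i j)).
  - have := orthogonal_col_dot j j T_orth; rewrite eqxx mulr1n => <-.
    by apply: eq_bigr => i _; rewrite expr2.
  - by move=> i; rewrite neq_ltn => /orP[/low|/high].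
  - by rewrite -(pmulr_lgt0 _ At_pos) -entry // A_sub.
move=> i; case: (ltngtP i j) => [ij|ji|/val_inj ->]; last by rewrite diag eqxx.
  by rewrite low // ltn_ord_eqF.
by rewrite high // eq_sym ltn_ord_eqF.
Qed.

Lemma orthogonal_intertwiner_eq1 : (forall i, T i 0 = (i == 0)%:R) -> T = 1%:M.
Proof.
move=> col0.
have cols k : forall i (m : 'I_n.+1), (m < k)%N -> T i m = (i == m)%:R.
  elim: k => [//|k IH] i m; rewrite ltnS leq_eqVlt => /orP[/eqP mE|]; last exact: IH.
  case: k mE IH => [m0 _|k mE IH]; first by rewrite (_ : m = 0) //; apply: val_inj.
  have kE : val (inord k : 'I_n.+1) = k by rewrite /= inordK // -mE ltnW.
  apply: (orthogonal_intertwiner_col (k := inord k)) => [|i' m' m'm]; first by rewrite kE.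
  by apply: IH; rewrite -mE.
by apply/matrixP => i j; rewrite mxE (cols n.+1).
Qed.

End OrthogonalIntertwiner.

Section Equivalence.
Variables (R : realType) (n d : nat) (A At T : 'M[R]_n.+1) (C Ct : 'M[R]_(d.+1, n.+1)).
Hypotheses (HAC : HOON A C) (HAtCt : HOON At Ct).
Hypotheses (strictAC : HOON_strict A C) (strictAtCt : HOON_strict At Ct).
Hypotheses (T_unit : T \in unitmx) (AtE : At = invmx T *m A *m T) (CtE : Ct = C *m T).

Lemma equiv_outputs k (w : 'cV[R]_n.+1) : Ct *m At ^+ k *m w = C *m A ^+ k *m (T *m w).
Proof. by rewrite AtE CtE expr_conjmx // !mulmxA (mulmxK T_unit). Qed.

Lemma equiv_isometry (w : 'cV[R]_n.+1) : sqnorm (T *m w) = sqnorm w.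
Proof.
apply/le_anti/andP; split.
  apply: (HOON_sqnorm_le_of_outputs HAC HAtCt (HOON_stable HAC strictAC.1 _)) => k.
  by rewrite equiv_outputs.
apply: (HOON_sqnorm_le_of_outputs HAtCt HAC (HOON_stable HAtCt strictAtCt.1 _)) => k.
by rewrite equiv_outputs.
Qed.

Lemma equiv_orthogonal : T^T *m T = 1%:M.
Proof.
apply/eqP; rewrite -subr_eq0; apply/eqP/qform_eq0 => [|v].
  by rewrite linearB /= trmx_mul trmxK trmx1.
by rewrite qformB -sqnorm_mul qform1 equiv_isometry subrr.
Qed.

Lemma equiv_col0 i : T i 0 = (i == 0)%:R.
Proof.
have Ct_row0 j : Ct 0 j = C 0 0 * T 0 j by rewrite CtE (HOON_row0_mul HAC).
have C00_gt0 := HOON_strict_C00_gt0 strictAC.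
have row0 j : j != 0 -> T 0 j = 0.
  move=> j_neq0; have /eqP := Ct_row0 j; rewrite HAtCt.2.1 //; last first.
    by rewrite lt0n; apply: contra j_neq0 => /eqP j0; apply/eqP/val_inj.
  by rewrite eq_sym mulf_eq0 gt_eqF //= => /eqP.
have TtT : T^T^T *m T^T = 1%:M by rewrite trmxK mulmx1C ?equiv_orthogonal.
have T00 : T 0 0 = 1.
  apply: (@sum_sqr_eq1_single _ _ (fun j => T 0 j)) => //.
    have := orthogonal_col_dot 0 0 TtT; rewrite eqxx mulr1n => <-.
    by apply: eq_bigr => j _; rewrite !mxE expr2.
  by rewrite -(pmulr_rgt0 _ C00_gt0) -Ct_row0 (HOON_strict_C00_gt0 strictAtCt).
have [->|i_neq0] := eqVneq i 0; first by rewrite T00.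
apply: (@sum_sqr_eq1_eq0 _ _ (fun i => T i 0) 0) => //.
have := orthogonal_col_dot 0 0 equiv_orthogonal; rewrite eqxx mulr1n => <-.
by apply: eq_bigr => j _; rewrite expr2.
Qed.

End Equivalence.

Unset Implicit Arguments.

Theorem corollary4p3 (R : realType) (n d : nat) (Hd : (1 <= d)%N) (Hdn : (d <= n)%N)
    (A : 'M[R]_n) (C : 'M[R]_(d, n)) (At : 'M[R]_n) (Ct : 'M[R]_(d, n)) :
  HOON A C -> HOON_strict A C -> HOON_nondegenerate A C ->
  HOON At Ct -> HOON_strict At Ct ->
  HOON_equiv A C At Ct ->
  At = A /\ Ct = C.
Proof.
case: d Hd Hdn C Ct => [//|d] _ Hdn C Ct.
case: n Hdn A C At Ct => [//|n] _ A C At Ct.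
move=> HAC strictAC _ HAtCt strictAtCt [T [T_unit [AtE CtE]]].
have AT : A *m T = T *m At by rewrite AtE !mulmxA (mulmxV T_unit) mul1mx.
have T1 : T = 1%:M.
  apply: (orthogonal_intertwiner_eq1 _ AT HAC.1 HAtCt.1).
  - exact: equiv_orthogonal HAC HAtCt strictAC strictAtCt T_unit AtE CtE.
  - exact: HOON_strict_subdiag_gt0 strictAC.
  - exact: HOON_strict_subdiag_gt0 strictAtCt.
  - exact: equiv_col0 HAC HAtCt strictAC strictAtCt T_unit AtE CtE.
by rewrite AtE CtE T1 invmx1 mulmx1 mul1mx mulmx1.
Qed.
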